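(* Let $rr(n)$ be the number of partitions of $n$ into parts congruent to $\pm1\pmod5$, i.e. $\sum_{n\ge0}rr(n)q^n=\prod_{i\ge0}\frac{1}{(1-q^{5i+1})(1-q^{5i+4})}$. Let $a_i$ be the coefficients of $\sum_{j\in\mathbb Z}(-1)^jq^{j(5j-1)/2}=\sum_{i\ge0}a_iq^i$; explicitly $a_i=1$ if $i=10j^2\pm j$ for some integer $j\ge0$, $a_i=-1$ if $i=10j^2\pm9j+2$ for some integer $j\ge0$, and $a_i=0$ otherwise. Then for every $n\ge0$, $$rr(n)=\sum_{i=0}^n a_i\sum_{\substack{c\in\mathcal C_{P_5}\\ |c|=n-i}}(-1)^{\widehat\ell(c)},$$ where $P_5=\{m(3m\pm1)/2: m\in\mathbb N\}$.
   Context: A composition is an ordered finite sequence of positive integers (including the empty one); $|c|$ is the sum of parts; $\mathcal C_T$ is the set of compositions with all parts in $T$. $\widehat P:=\{m(3m\pm1)/2: m\in\mathbb N,\ m\text{ even}\}$, and $\widehat\ell(c)$ is the number of parts of $c$ lying in $\widehat P$. *)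

From mathcomp Require Import all_boot all_order all_algebra.
Set Implicit Arguments. Unset Strict Implicit. Unset Printing Implicit Defensive.
Import Order.TTheory GRing.Theory Num.Theory.

(* comps_fuel f n : all compositions (ordered lists of positive integers) of n,
   provided n <= f.  The first part k ranges over 1..n. *)
Fixpoint comps_fuel (f n : nat) : seq (seq nat) :=
  if n is 0 then [:: [::]] else
  if f is f'.+1 then
    flatten [seq [seq k :: c | c <- comps_fuel f' (n - k)] | k <- iota 1 n]
  else [::].

Definition comps (n : nat) : seq (seq nat) := comps_fuel n n.

(* Generalized pentagonal numbers P_5 = { m(3m+-1)/2 : m >= 1 }.
   (m <= k suffices since m(3m-1)/2 >= m.) *)
Definition inP5 (k : nat) : bool :=
  has (fun m => (2 * k == m * (3 * m + 1)) || (2 * k == m * (3 * m - 1)))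
      (iota 1 k).

Definition inPhat (k : nat) : bool :=
  has (fun m => ~~ odd m &&
        ((2 * k == m * (3 * m + 1)) || (2 * k == m * (3 * m - 1))))
      (iota 1 k).

Definition ellhat (c : seq nat) : nat := count inPhat c.

Definition rr (n : nat) : nat :=
  count (fun c => sorted geq c && all (fun p => (p %% 5 == 1) || (p %% 5 == 4)) c)
        (comps n).

(* a_i : coefficient of q^i in sum_{j in Z} (-1)^j q^{j(5j-1)/2}.
   Only j with |j| <= i can contribute, so we sum over j = k - i, k < 2i+1. *)
Definition acoef (i : nat) : int :=
  \sum_(k < (2 * i).+1)
     let j : int := (k%:Z - i%:Z)%R in
     if (j * (5 * j - 1) == 2 * i%:Z)%R then ((-1) ^+ `|j|%N)%R else 0%R.

(* Compare power series modulo X^L via polynomials.  Splitting off the first part of a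
   composition gives E(q) C(q) = 1, where C(q) is the signed series of C_{P_5} and
   E(q) = 1 - sum_{k in P_5} (-1)^[k in hat P] q^k; removing the largest part of a
   partition gives (sum_n rr(n) q^n) (q;q^5)_oo (q^4;q^5)_oo = 1.  The finite Jacobi
   triple product
     prod_{i<n} (1 - z Q^i) prod_{i<m} (z - Q^(i+1))
       = sum_K (-1)^(K+m) Q^binom(K-m,2) z^K [m+n choose K]_Q,
   proved by showing that both sides satisfy the two q-Pascal recurrences, specializes at
   Q = q^b, z = q^c (0 < c < b) to
     (q^c;q^b)_oo (q^(b-c);q^b)_oo (q^b;q^b)_oo = sum_j (-1)^j q^(j (b j - b + 2 c) / 2)
   modulo q^L: [2M choose K]_(q^b) (q^b;q^b)_M = 1 mod q^L when K and 2M - K are large,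
   and the other terms have degree at least L.  For (b, c) = (3, 1) this is Euler's
   pentagonal theorem E(q) = (q;q)_oo, for (b, c) = (5, 2) it identifies the a_i series
   A(q) with (q^2,q^3,q^5;q^5)_oo.  Hence sum_n rr(n) q^n = A(q) / (q;q)_oo = A(q) C(q). *)

From mathcomp Require Import all_boot all_order all_algebra.
From mathcomp Require Import ring zify.
Import GRing.Theory.

Set Implicit Arguments.
Unset Strict Implicit.
Unset Printing Implicit Defensive.

Local Open Scope ring_scope.

(** * Power series modulo X^L *)

Notation "p = q %[mod 'X^ L ]" := (take_poly L p = take_poly L q) : ring_scope.

Section TruncatedEquality.
Variable R : comNzRingType.
Implicit Types p q r : {poly R}.

Lemma eq_truncP L p q :
  reflect (forall i, (i < L)%N -> p`_i = q`_i) (take_poly L p == take_poly L q).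
Proof.
apply: (iffP eqP) => [e i iL | e]; last first.
  by apply/polyP => i; rewrite !coef_take_poly; case: ifP => // /e.
by have := congr1 (fun s : {poly R} => s`_i) e; rewrite /= !coef_take_poly iL.
Qed.

Lemma eq_truncM L p q p' q' :
  p = q %[mod 'X^L] -> p' = q' %[mod 'X^L] -> p * p' = q * q' %[mod 'X^L].
Proof.
move=> /eqP/eq_truncP h /eqP/eq_truncP h'; apply/eqP/eq_truncP => i iL.
rewrite !coefM; apply: eq_bigr => j _.
by rewrite h ?h' //; apply: leq_ltn_trans iL; rewrite ?leq_subr // -ltnS.
Qed.

Lemma eq_truncMl L p q r : p = q %[mod 'X^L] -> r * p = r * q %[mod 'X^L].
Proof. exact: eq_truncM. Qed.

Lemma eq_truncMr L p q r : p = q %[mod 'X^L] -> p * r = q * r %[mod 'X^L].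
Proof. by move/eq_truncM; apply. Qed.

Lemma eq_trunc_sum L (I : eqType) (s : seq I) (P : pred I) (F G : I -> {poly R}) :
  (forall i, i \in s -> P i -> F i = G i %[mod 'X^L]) ->
  \sum_(i <- s | P i) F i = \sum_(i <- s | P i) G i %[mod 'X^L].
Proof.
move=> h; rewrite !take_poly_sum big_seq_cond [RHS]big_seq_cond.
by apply: eq_bigr => i /andP [si Pi]; exact: h si Pi.
Qed.

Lemma eq_trunc_XnM0 L k p : (L <= k)%N -> 'X^k * p = 0 %[mod 'X^L].
Proof.
by move=> hk; apply/eqP/eq_truncP => i iL; rewrite coefXnM coef0 (leq_trans iL hk).
Qed.

Lemma eq_trunc_1subXn L k : (L <= k)%N -> (1 - 'X^k : {poly R}) = 1 %[mod 'X^L].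
Proof.
by move=> hk; rewrite take_polyD -mulrN1 (eq_trunc_XnM0 _ hk) take_poly0r addr0.
Qed.

Lemma eq_trunc_mulIr L p q r w :
  r * w = 1 %[mod 'X^L] -> p * r = q * r %[mod 'X^L] -> p = q %[mod 'X^L].
Proof.
move=> rw pq; rewrite -[p]mulr1 -[q]mulr1.
rewrite -[LHS](eq_truncMl p rw) -[RHS](eq_truncMl q rw) !mulrA.
exact: eq_truncMr.
Qed.

Lemma eq_trunc_inv_1subXn L k : (0 < k)%N ->
  exists w : {poly R}, (1 - 'X^k) * w = 1 %[mod 'X^L].
Proof.
move=> k0; exists (\sum_(j < L) 'X^(k * j)).
have -> : (1 - 'X^k) * \sum_(j < L) 'X^(k * j) = 1 - 'X^(k * L) :> {poly R}.
  elim: L => [|L IH]; first by rewrite big_ord0 muln0 expr0 mulr0 subrr.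
  by rewrite big_ord_recr /= mulrDr IH mulnS exprD; ring.
by apply: eq_trunc_1subXn; rewrite leq_pmull.
Qed.

End TruncatedEquality.

(** * Gaussian binomials and the Jacobi triple product *)

Section GaussianBinomials.
Variables (R : comNzRingType) (Q : R).

Definition qpoch k := \prod_(i < k) (1 - Q ^+ i.+1).

Lemma qpochS k : qpoch k.+1 = qpoch k * (1 - Q ^+ k.+1).
Proof. by rewrite /qpoch big_ord_recr. Qed.

(* [qbin a d] is the Gaussian binomial coefficient [a + d choose a] in [Q]. *)
Fixpoint qbin a : nat -> R :=
  if a is a'.+1 then
    fix qbin_a d := if d is d'.+1 then qbin a' d + Q ^+ a * qbin_a d' else 1
  else fun=> 1.

Lemma qbin0l d : qbin 0 d = 1. Proof. by []. Qed.

Lemma qbin0r a : qbin a 0 = 1. Proof. by case: a. Qed.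

Lemma qbinSS a d : qbin a.+1 d.+1 = qbin a d.+1 + Q ^+ a.+1 * qbin a.+1 d.
Proof. by []. Qed.

Lemma qbin1r a : qbin a 1 + Q ^+ a.+1 = 1 + Q * qbin a 1.
Proof.
elim: a => [|a IHa]; first by rewrite qbin0l; ring.
by rewrite qbinSS qbin0r mulr1 [in LHS]IHa !exprS; ring.
Qed.

Lemma qbinSS_sym a d : qbin a.+1 d.+1 = qbin a.+1 d + Q ^+ d.+1 * qbin a d.+1.
Proof.
elim: a d => [|a IHa] d.
  elim: d => [|d IHd]; first by rewrite qbinSS qbin0l !qbin0r; ring.
  by rewrite [LHS]qbinSS [in LHS]IHd [qbin 1 d.+1]qbinSS !qbin0l !exprS; ring.
elim: d => [|d IHd]; first by rewrite qbinSS !qbin0r mulr1 qbin1r expr1.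
rewrite [LHS]qbinSS [in LHS](IHa d.+1) [in LHS]IHd.
by rewrite (qbinSS a.+1 d) (qbinSS a d.+1) !exprS; ring.
Qed.

Lemma qbin_qpoch a d : qbin a d * qpoch a * qpoch d = qpoch (a + d).
Proof.
elim: a d => [|a IHa] d; first by rewrite qbin0l /qpoch big_ord0 !mul1r.
elim: d => [|d IHd]; first by rewrite qbin0r /qpoch big_ord0 addn0 !mulr1 mul1r.
have e1 := IHa d.+1; rewrite addnS qpochS in e1.
have e2 := IHd; rewrite addSn qpochS in e2.
rewrite addSn addnS qbinSS (qpochS a) (qpochS d) (qpochS (a + d).+1).
have -> : Q ^+ (a + d).+2 = Q ^+ a.+1 * Q ^+ d.+1 by rewrite -exprD addSn addnS.
transitivity (qpoch (a + d).+1 * (1 - Q ^+ a.+1)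
              + Q ^+ a.+1 * qpoch (a + d).+1 * (1 - Q ^+ d.+1)); last by ring.
by rewrite -{1}e1 -e2; ring.
Qed.

Definition gbin N K := if (K <= N)%N then qbin K (N - K) else 0.

Lemma gbin0 N : gbin N 0 = 1.
Proof. by rewrite /gbin qbin0l. Qed.

Lemma gbin_gt N K : (N < K)%N -> gbin N K = 0.
Proof. by rewrite /gbin ltnNge => /negbTE ->. Qed.

Lemma gbinSS N K : gbin N.+1 K.+1 = gbin N K + Q ^+ K.+1 * gbin N K.+1.
Proof.
rewrite /gbin ltnS subSS; case: (ltngtP K N) => [KN|//|<-].
- by rewrite -(subnSK KN) qbinSS.
- by rewrite mulr0 addr0.
- by rewrite subnn !qbin0r mulr0 addr0.
Qed.

Lemma gbinSS_sym N K : (K <= N)%N ->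
  gbin N.+1 K.+1 = gbin N K.+1 + Q ^+ (N - K) * gbin N K.
Proof.
rewrite /gbin ltnS subSS => KN; rewrite KN.
move: KN; rewrite leq_eqVlt => /orP[/eqP <-|ltKN].
- by rewrite ltnn subnn !qbin0r expr0 mulr1 add0r.
- by rewrite ltKN -(subnSK ltKN) qbinSS_sym.
Qed.

End GaussianBinomials.

Lemma bin2_mul2 n : ('C(n, 2) * 2 = n * n.-1)%N.
Proof. by rewrite -[2%N in LHS]/(2`!) bin_ffact !ffactnS ffactn0 muln1. Qed.

(* The binomial coefficient (K - m choose 2) for the integer K - m, see [triE]. *)
Definition tri m K := ('C(K - m, 2) + 'C(m.+1 - K, 2))%N.

Lemma triE m K : (tri m K)%:Z * 2 = (K%:Z - m%:Z) * (K%:Z - m%:Z - 1).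
Proof.
rewrite /tri; case: (leqP m K) => h.
  rewrite (@bin_small (m.+1 - K)) ?addn0; last by lia.
  have := bin2_mul2 (K - m); nia.
rewrite (@bin_small (K - m)) ?add0n; last by lia.
have := bin2_mul2 (m.+1 - K); nia.
Qed.

Lemma triSS m K : tri m.+1 K.+1 = tri m K.
Proof. by rewrite /tri !subSS. Qed.

Lemma triS m K : (tri m K.+1 + m = tri m K + K)%N.
Proof. have := triE m K; have := triE m K.+1; nia. Qed.

Lemma triSl m K : (tri m.+1 K + K = tri m K + m.+1)%N.
Proof. have := triE m K; have := triE m.+1 K; nia. Qed.

Lemma sum_nat_shiftl (V : nmodType) (F : nat -> V) N : F N.+1 = 0 ->
  F 0%N + \sum_(0 <= K < N.+1) F K.+1 = \sum_(0 <= K < N.+1) F K.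
Proof. by move=> FN; rewrite -big_nat_recl // big_nat_recr //= FN addr0. Qed.

Section FiniteJacobiTripleProduct.
Variables (R : comNzRingType) (Q z : R).

Let term m K := (-1) ^+ (K + m) * Q ^+ tri m K * z ^+ K.

Let jtp_sum m n := \sum_(0 <= K < (m + n).+1) term m K * gbin Q (m + n) K.

Lemma jtp_sumSr m n : jtp_sum m n.+1 = (1 - z * Q ^+ n) * jtp_sum m n.
Proof.
rewrite /jtp_sum addnS; set N := (m + n)%N.
rewrite big_nat_recl // (_ : gbin Q N.+1 0 = gbin Q N 0) ?gbin0 //.
rewrite (@eq_big_nat _ _ _ 0 N.+1 _ (fun K => term m K.+1 * gbin Q N K.+1
           + term m K.+1 * (Q ^+ (N - K) * gbin Q N K))); last first.
  by move=> K /andP [_ KN]; rewrite gbinSS_sym // mulrDr.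
rewrite big_split /= addrA.
rewrite (@sum_nat_shiftl _ (fun K => term m K * gbin Q N K)) ?gbin_gt ?mulr0 //.
rewrite (@eq_big_nat _ _ _ 0 N.+1 (fun K => term m K.+1 * (Q ^+ (N - K) * gbin Q N K))
           (fun K => - (z * Q ^+ n) * (term m K * gbin Q N K))); last first.
  move=> K /andP [_ KN]; rewrite /term.
  have e : Q ^+ tri m K.+1 * Q ^+ (N - K) = Q ^+ tri m K * Q ^+ n.
    by rewrite -!exprD; congr (_ ^+ _); have := triS m K; lia.
  transitivity ((-1) ^+ (K.+1 + m) * (Q ^+ tri m K.+1 * Q ^+ (N - K)) * z ^+ K.+1
                * gbin Q N K); first by ring.
  by rewrite e addSn !exprS; ring.
by rewrite -big_distrr /=; ring.
Qed.

Lemma jtp_sumSl m n : jtp_sum m.+1 n = (z - Q ^+ m.+1) * jtp_sum m n.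
Proof.
rewrite /jtp_sum addSn; set N := (m + n)%N.
rewrite big_nat_recl //.
have -> : term m.+1 0 * gbin Q N.+1 0 = term m.+1 0 * Q ^+ 0 * gbin Q N 0.
  by rewrite !gbin0 expr0 !mulr1.
rewrite (@eq_big_nat _ _ _ 0 N.+1 _ (fun K => term m.+1 K.+1 * gbin Q N K
           + term m.+1 K.+1 * Q ^+ K.+1 * gbin Q N K.+1)); last first.
  by move=> K _; rewrite gbinSS mulrDr mulrA.
rewrite big_split /= addrCA.
rewrite (@sum_nat_shiftl _ (fun K => term m.+1 K * Q ^+ K * gbin Q N K)) /=;
  last by rewrite gbin_gt ?mulr0.
rewrite (@eq_big_nat _ _ _ 0 N.+1 (fun K => term m.+1 K * Q ^+ K * gbin Q N K)
           (fun K => - Q ^+ m.+1 * (term m K * gbin Q N K))); last first.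
  move=> K _; rewrite /term.
  have e : Q ^+ tri m.+1 K * Q ^+ K = Q ^+ tri m K * Q ^+ m.+1 by rewrite -!exprD triSl.
  transitivity ((-1) ^+ (K + m.+1) * (Q ^+ tri m.+1 K * Q ^+ K) * z ^+ K * gbin Q N K);
    first by ring.
  by rewrite e addnS !exprS; ring.
rewrite (@eq_big_nat _ _ _ 0 N.+1 (fun K => term m.+1 K.+1 * gbin Q N K)
           (fun K => z * (term m K * gbin Q N K))); last first.
  by move=> K _; rewrite /term triSS addSn addnS !exprS; ring.
by rewrite -!big_distrr /=; ring.
Qed.

Lemma jacobi_triple_product_finite m n :
  \prod_(i < n) (1 - z * Q ^+ i) * \prod_(i < m) (z - Q ^+ i.+1) =
  \sum_(0 <= K < (m + n).+1)
     (-1) ^+ (K + m) * Q ^+ tri m K * z ^+ K * gbin Q (m + n) K.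
Proof.
rewrite -/(jtp_sum m n); elim: m n => [|m IHm] n.
  elim: n => [|n IHn].
    by rewrite !big_ord0 /jtp_sum big_nat1 gbin0 /term /tri; ring.
  by rewrite jtp_sumSr -IHn big_ord_recr /=; ring.
by rewrite jtp_sumSl -IHm [in LHS]big_ord_recr /=; ring.
Qed.

End FiniteJacobiTripleProduct.

Definition theta_exp b c M K := (b * tri M K + c * K - c * M)%N.

Lemma theta_exp_bound b c M K : (0 < c)%N -> (c < b)%N ->
  (c * M + (M - K) + (K - M) <= b * tri M K + c * K)%N.
Proof. by move=> c0 cb; have := triE M K; case: (leqP K M) => KM; nia. Qed.

Lemma theta_expE b c M K : (0 < c)%N -> (c < b)%N ->
  (theta_exp b c M K)%:Z * 2 = (K%:Z - M%:Z) * (b%:Z * (K%:Z - M%:Z) - b%:Z + 2 * c%:Z).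
Proof.
move=> c0 cb; have := theta_exp_bound M K c0 cb; have := triE M K.
rewrite /theta_exp; nia.
Qed.

Section JacobiTripleProduct.
Variable R : comNzRingType.

Lemma qpoch_trunc b L k : (0 < b)%N -> (L <= k)%N ->
  qpoch ('X^b : {poly R}) k = qpoch 'X^b L %[mod 'X^L].
Proof.
move=> b0; elim: k => [|k IHk]; first by rewrite leqn0 => /eqP ->.
rewrite leq_eqVlt ltnS => /orP [/eqP -> // | Lk].
have Xk : (1 - 'X^(b * k.+1) : {poly R}) = 1 %[mod 'X^L].
  by apply: eq_trunc_1subXn; rewrite (leq_trans Lk) // (leq_trans (leqnSn k)) ?leq_pmull.
by rewrite qpochS -exprM (eq_truncM (IHk Lk) Xk) mulr1.
Qed.

Lemma qpoch_inv_trunc b L k : (0 < b)%N ->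
  exists w, qpoch ('X^b : {poly R}) k * w = 1 %[mod 'X^L].
Proof.
move=> b0; elim: k => [|k [w Pw]]; first by exists 1; rewrite /qpoch big_ord0 mulr1.
have bk0 : (0 < b * k.+1)%N by rewrite muln_gt0 b0.
have [w' Xw'] := eq_trunc_inv_1subXn R L bk0.
exists (w * w'); rewrite qpochS -exprM mulrACA.
by rewrite (eq_truncM Pw Xw') mulr1.
Qed.

Lemma qbin_qpoch_trunc b L a d M : (0 < b)%N ->
  (L <= a)%N -> (L <= d)%N -> (L <= M)%N ->
  qbin ('X^b : {poly R}) a d * qpoch 'X^b M = 1 %[mod 'X^L].
Proof.
move=> b0 La Ld LM; set P := qpoch ('X^b : {poly R}) L.
have tr k : (L <= k)%N -> qpoch ('X^b : {poly R}) k = P %[mod 'X^L].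
  exact: qpoch_trunc.
have [w Pw] := qpoch_inv_trunc L L b0.
apply: (eq_trunc_mulIr Pw); rewrite mul1r -(tr (a + d)%N (leq_trans La (leq_addr _ _))).
rewrite -qbin_qpoch -!mulrA (eq_truncMl _ (eq_truncM (tr a La) (tr d Ld))).
by rewrite (eq_truncMl _ (eq_truncM (tr M LM) (erefl (take_poly L P)))).
Qed.

Definition theta_poly b c M : {poly R} :=
  \sum_(0 <= K < (M + M).+1) (-1) ^+ (K + M) * 'X^(theta_exp b c M K).

Lemma jacobi_triple_product_exact b c M : (0 < c)%N -> (c < b)%N ->
  \prod_(i < M) (1 - 'X^(c + b * i)) * \prod_(i < M) (1 - 'X^(b * i.+1 - c)) =
  \sum_(0 <= K < (M + M).+1)
     (-1) ^+ (K + M) * 'X^(theta_exp b c M K) * gbin ('X^b : {poly R}) (M + M) K.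
Proof.
move=> c0 cb; apply: (monic_lreg (monicXn R (c * M))); rewrite mulrCA.
have -> : 'X^(c * M) * \prod_(i < M) (1 - 'X^(b * i.+1 - c))
          = \prod_(i < M) ('X^c - ('X^b) ^+ i.+1) :> {poly R}.
  rewrite exprM -[M in _ ^+ M]card_ord -prodr_const -big_split /=.
  apply: eq_bigr => i _; rewrite -exprM mulrBr mulr1 -exprD subnKC //.
  exact: leq_trans (ltnW cb) (leq_pmulr _ _).
have -> : \prod_(i < M) (1 - 'X^(c + b * i))
          = \prod_(i < M) (1 - 'X^c * ('X^b) ^+ i) :> {poly R}.
  by apply: eq_bigr => i _; rewrite -exprM -exprD.
rewrite jacobi_triple_product_finite big_distrr; apply: eq_big_nat => K _ /=.
have e : ('X^b) ^+ tri M K * ('X^c) ^+ K = 'X^(c * M) * 'X^(theta_exp b c M K) :> {poly R}.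
  rewrite -!exprM -!exprD /theta_exp subnKC //.
  by have := theta_exp_bound M K c0 cb; lia.
transitivity ((-1) ^+ (K + M) * (('X^b) ^+ tri M K * ('X^c) ^+ K)
              * gbin ('X^b : {poly R}) (M + M) K); first by ring.
by rewrite e; ring.
Qed.

Lemma jacobi_triple_product_trunc b c M L : (0 < c)%N -> (c < b)%N -> (L + L <= M)%N ->
  \prod_(i < M) ((1 - 'X^(c + b * i)) * (1 - 'X^(b * i.+1 - c)) * (1 - 'X^(b * i.+1)))
  = theta_poly b c M %[mod 'X^L].
Proof.
move=> c0 cb LM; have b0 : (0 < b)%N := ltn_trans c0 cb.
rewrite !big_split /=.
have -> : \prod_(i < M) (1 - 'X^(b * i.+1)) = qpoch ('X^b : {poly R}) M.
  by apply: eq_bigr => i _; rewrite exprM.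
rewrite jacobi_triple_product_exact // big_distrl /=.
apply: eq_trunc_sum => K; rewrite mem_index_iota => /andP [_ KM] _.
(* Central terms: [gbin] times [qpoch] is 1 modulo X^L; the others have degree >= L. *)
have [/andP [LK LMK] | farK] := boolP ((L <= K) && (L <= M + M - K))%N.
  rewrite -(mulrA _ (gbin _ _ _)) -[in RHS](mulr1 (_ * _)); apply: eq_truncMl.
  rewrite /gbin -ltnS KM; apply: qbin_qpoch_trunc => //; lia.
have LE : (L <= theta_exp b c M K)%N.
  by move: farK; have := theta_exp_bound M K c0 cb; rewrite /theta_exp; lia.
rewrite (mulrC ((-1) ^+ _)) -!mulrA (eq_trunc_XnM0 _ LE).
by rewrite (eq_trunc_XnM0 _ LE).
Qed.

End JacobiTripleProduct.

(** * Theta coefficients and pentagonal numbers *)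

Lemma coef_theta_poly (R : comNzRingType) b c M i :
  (theta_poly R b c M)`_i =
  \sum_(0 <= K < (M + M).+1) (-1) ^+ (K + M) * (i == theta_exp b c M K)%:R.
Proof.
rewrite coef_sum; apply: eq_bigr => K _.
have -> : (-1) ^+ (K + M) = ((-1) ^+ (K + M))%:P :> {poly R}.
  by rewrite rmorphXn rmorphN1.
by rewrite coefCM coefXn.
Qed.

Lemma sum_centered (V : nmodType) (F : int -> V) M :
  \sum_(0 <= K < (M + M).+1) F (K%:Z - M%:Z) =
  F 0 + \sum_(m < M) (F m.+1%:Z + F (- m.+1%:Z)).
Proof.
elim: M => [|M IH]; first by rewrite big_nat1 big_ord0 subrr addr0.
rewrite addSn addnS big_nat_recl // big_nat_recr //= big_ord_recr /=.
rewrite (eq_big_nat _ _ (F2 := fun K => F (K%:Z - M%:Z))); last by move=> K _; congr F; lia.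
rewrite IH (_ : (M + M).+2%:Z - M.+1%:Z = M.+1%:Z); last by lia.
by rewrite sub0r addrC -!addrA.
Qed.

Lemma sign_addn_dist (R : pzRingType) K M :
  (-1) ^+ (K + M) = (-1) ^+ `|K%:Z - M%:Z|%N :> R.
Proof.
have -> : (K + M = `|K%:Z - M%:Z| + 2 * minn K M)%N by lia.
by rewrite -signr_odd oddD oddM /= addbF signr_odd.
Qed.

Definition theta_term b c i (j : int) : int :=
  if j * (b%:Z * j - b%:Z + 2 * c%:Z) == 2 * i%:Z then (-1) ^+ `|j|%N else 0.

Definition theta_coef b c i := \sum_(0 <= k < (i + i).+1) theta_term b c i (k%:Z - i%:Z).

Lemma theta_term_out b c i m : (0 < c)%N -> (c < b)%N -> (i <= m)%N ->
  theta_term b c i m.+1%:Z + theta_term b c i (- m.+1%:Z) = 0.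
Proof.
move=> c0 cb im; rewrite /theta_term.
by do 2 (case: eqP => [?|_]; first nia); rewrite addr0.
Qed.

Lemma coef_theta_poly_trunc b c M i : (0 < c)%N -> (c < b)%N -> (i <= M)%N ->
  (theta_poly int b c M)`_i = theta_coef b c i.
Proof.
move=> c0 cb iM; rewrite coef_theta_poly.
rewrite (eq_big_nat _ _ (F2 := fun K => theta_term b c i (K%:Z - M%:Z))); last first.
  move=> K _; rewrite /theta_term sign_addn_dist -(theta_expE M K c0 cb).
  case: (i =P _) => [<-|iE]; first by rewrite [_ * 2]mulrC eqxx mulr1.
  by rewrite ifF ?mulr0 //; apply/eqP; lia.
rewrite /theta_coef !sum_centered; congr (_ + _).
rewrite (big_ord_widen _
  (fun m => theta_term b c i m.+1%:Z + theta_term b c i (- m.+1%:Z)) iM).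
rewrite [RHS]big_mkcond /=; apply: eq_bigr => m _.
by case: ltnP => // im; rewrite theta_term_out.
Qed.

Lemma acoefE i : acoef i = theta_coef 5 2 i.
Proof.
rewrite /acoef /theta_coef (_ : (2 * i = i + i)%N) ?big_mkord; last by lia.
apply: eq_bigr => k _; rewrite /theta_term.
by rewrite (_ : 5%:Z * _ - 5%:Z + 2 * 2%:Z = 5 * (k%:Z - i%:Z) - 1); last by ring.
Qed.

Lemma big_iota1 (R : Type) (idx : R) (op : Monoid.com_law idx) n (F : nat -> R) :
  \big[op/idx]_(k <- iota 1 n) F k = \big[op/idx]_(j < n) F j.+1.
Proof.
rewrite -[iota 1 n]/(iota (1 + 0) n) iotaDl big_map.
by rewrite (_ : iota 0 n = index_iota 0 n) ?big_mkord // /index_iota subn0.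
Qed.

Definition pent i m := ((2 * i == m * (3 * m + 1)) || (2 * i == m * (3 * m - 1)))%N.

Lemma pent_inj i m1 m2 : pent i m1 -> pent i m2 -> m1 = m2.
Proof.
wlog le12 : m1 m2 / (m1 <= m2)%N.
  by move=> W p1 p2; case: (leqP m1 m2) => [|/ltnW] le; [|apply/esym]; apply: W.
by case/orP => /eqP p1 /orP [] /eqP p2; nia.
Qed.

Definition pent_sign k : int := if inP5 k then (-1) ^+ inPhat k else 0.

Definition euler_coef k : int := if k == 0%N then 1 else - pent_sign k.

Lemma theta_term_pent i m :
  theta_term 3 1 i m.+1%:Z + theta_term 3 1 i (- m.+1%:Z) =
  if pent i m.+1 then (-1) ^+ m.+1 else 0.
Proof.
rewrite /theta_term /pent abszN absz_nat.
have -> : (m.+1%:Z * (3%:Z * m.+1%:Z - 3%:Z + 2 * 1%:Z) == 2 * i%:Z)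
          = (2 * i == m.+1 * (3 * m.+1 - 1))%N by apply/eqP/eqP; lia.
have -> : (- m.+1%:Z * (3%:Z * - m.+1%:Z - 3%:Z + 2 * 1%:Z) == 2 * i%:Z)
          = (2 * i == m.+1 * (3 * m.+1 + 1))%N by apply/eqP/eqP; lia.
case: (2 * i =P _)%N => [e1|_]; case: (2 * i =P _)%N => [e2|_];
  rewrite ?addr0 ?add0r //; nia.
Qed.

Lemma sum_pent i :
  \sum_(m <- iota 1 i) (if pent i m then (-1) ^+ m else 0) = - pent_sign i.
Proof.
rewrite -big_mkcond /pent_sign /inP5 /inPhat -/(pent i).
case: hasP => [[m0 m0i pm0] | nopent]; last first.
  rewrite big_seq_cond big1 ?oppr0 // => m /andP [mi pm].
  by case: nopent; exists m.
have -> : has (fun m => ~~ odd m && pent i m) (iota 1 i) = ~~ odd m0.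
  apply/hasP/idP => [[m _ /andP [om pm]] | om]; first by rewrite -(pent_inj pm pm0).
  by exists m0; rewrite ?om.
rewrite (eq_bigl (pred1 m0)) => [|m]; last by apply/idP/eqP => [/pent_inj/(_ pm0) | ->].
rewrite -big_filter filter_pred1_uniq ?iota_uniq // big_seq1.
by rewrite -signr_odd; case: odd.
Qed.

Lemma euler_coefE i : euler_coef i = theta_coef 3 1 i.
Proof.
case: i => [|i]; first by rewrite /theta_coef big_nat1.
rewrite /theta_coef sum_centered (_ : theta_term 3 1 i.+1 0 = 0) // add0r.
under eq_bigr do rewrite theta_term_pent.
by rewrite -(big_iota1 _ _ (fun m => if pent i.+1 m then (-1) ^+ m else 0)) sum_pent.
Qed.

(** * Signed compositions with parts in P_5 *)

Lemma comps_fuelS f n : comps_fuel f.+1 n.+1 =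
  flatten [seq [seq k :: c | c <- comps_fuel f (n.+1 - k)] | k <- iota 1 n.+1].
Proof. by []. Qed.

Lemma comps_fuel_eq n f1 f2 : (n <= f1)%N -> (n <= f2)%N ->
  comps_fuel f1 n = comps_fuel f2 n.
Proof.
elim/ltn_ind: n f1 f2 => -[|n] IH [|f1] [|f2] // nf1 nf2.
rewrite !comps_fuelS; congr flatten; apply/eq_in_map => k.
rewrite mem_iota => /andP [k1 kn].
by congr map; apply: IH; lia.
Qed.

Lemma compsS n :
  comps n.+1 = flatten [seq [seq k :: c | c <- comps (n.+1 - k)] | k <- iota 1 n.+1].
Proof.
rewrite /comps comps_fuelS; congr flatten; apply/eq_in_map => k.
by rewrite mem_iota => /andP [k1 kn]; congr map; apply: comps_fuel_eq; lia.
Qed.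

Lemma big_compsS (R : Type) (idx : R) (op : Monoid.com_law idx) (F : seq nat -> R) n :
  \big[op/idx]_(c <- comps n.+1) F c =
  \big[op/idx]_(j < n.+1) \big[op/idx]_(c <- comps (n - j)) F (j.+1 :: c).
Proof.
rewrite compsS big_flatten big_map big_iota1; apply: eq_bigr => j _.
by rewrite big_map subSS.
Qed.

Lemma count_compsS (P : pred (seq nat)) n :
  count P (comps n.+1) = (\sum_(j < n.+1) count (fun c => P (j.+1 :: c)) (comps (n - j)))%N.
Proof.
rewrite -sum1_count big_mkcond big_compsS; apply: eq_bigr => j _.
by rewrite -big_mkcond sum1_count.
Qed.

Definition comp_sum n : int := \sum_(c <- comps n | all inP5 c) (-1) ^+ ellhat c.

Lemma comp_sumS n : comp_sum n.+1 = \sum_(j < n.+1) pent_sign j.+1 * comp_sum (n - j).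
Proof.
rewrite /comp_sum big_mkcond big_compsS; apply: eq_bigr => j _.
rewrite /pent_sign [in RHS]big_mkcond big_distrr /=; apply: eq_bigr => c _ /=.
case: (inP5 j.+1) => /=; last by rewrite mul0r.
by case: (all inP5 c); rewrite ?mulr0 // /ellhat /= exprD.
Qed.

Lemma coef_poly_mul (R : nzSemiRingType) L (a b : nat -> R) i : (i < L)%N ->
  (\poly_(j < L) a j * \poly_(j < L) b j)`_i = \sum_(j < i.+1) a j * b (i - j)%N.
Proof.
move=> iL; rewrite coefM; apply: eq_bigr => j _.
by rewrite !coef_poly (leq_ltn_trans (leq_subr _ _) iL) (leq_ltn_trans _ iL) // -ltnS.
Qed.

Lemma euler_mul_comp_sum L :
  \poly_(i < L) euler_coef i * \poly_(i < L) comp_sum i = 1 %[mod 'X^L].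
Proof.
apply/eqP/eq_truncP => -[|i] iL; rewrite coef_poly_mul // coef1.
  by rewrite big_ord1 /comp_sum (_ : comps 0 = [:: [::]]) // big_cons big_nil.
rewrite big_ord_recl /euler_coef /= mul1r comp_sumS -big_split /=.
by apply: big1 => j _; rewrite /bump /= add1n subSS; ring.
Qed.

(** * Partitions into parts congruent to 1 or 4 modulo 5 *)

Definition rr_part p := ((p %% 5 == 1) || (p %% 5 == 4))%N.

Definition rr_partition_le m c :=
  [&& sorted geq c, all rr_part c & all (fun p => p <= m)%N c].

Definition rr_le m N := count (rr_partition_le m) (comps N).

Lemma sorted_geq_cons k c :
  sorted geq (k :: c) = all (fun p => p <= k)%N c && sorted geq c.
Proof. by rewrite /= path_sortedE //; move=> y x z /= yx zy; apply: leq_trans zy yx. Qed.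

Lemma rr_partition_le_cons m k c :
  rr_partition_le m (k :: c) = [&& (k <= m)%N, rr_part k & rr_partition_le k c].
Proof.
rewrite /rr_partition_le sorted_geq_cons /=.
case km: (k <= m)%N; case ck: (all _ c); rewrite /= ?andbF //.
have -> : all (fun p => p <= m)%N c by apply: sub_all ck => p /= pk; exact: leq_trans pk km.
by case: (sorted geq c); case: (rr_part k); case: (all rr_part c).
Qed.

Lemma rr_partition_cons k c :
  sorted geq (k :: c) && all rr_part (k :: c) = rr_part k && rr_partition_le k c.
Proof.
rewrite sorted_geq_cons /rr_partition_le [all _ (_ :: _)]/=.
by case: (rr_part k); case: (sorted geq c); case: (all rr_part c); case: (all _ c).
Qed.

Lemma rr_leS m N : rr_le m N.+1 =
  (\sum_(j < N.+1) ((j.+1 <= m) && rr_part j.+1) * rr_le j.+1 (N - j))%N.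
Proof.
rewrite /rr_le count_compsS; apply: eq_bigr => j _.
under eq_count do rewrite rr_partition_le_cons andbA.
by case: (_ && _); rewrite ?mul1n // count_pred0.
Qed.

Lemma rr_le_step m N : rr_le m.+1 N =
  (rr_le m N + (rr_part m.+1 && (m.+1 <= N)) * rr_le m.+1 (N - m.+1))%N.
Proof.
case: N => [|N]; first by rewrite andbF.
rewrite !rr_leS subSS ltnS.
rewrite (eq_bigr (fun j : 'I_N.+1 => ((j.+1 <= m) && rr_part j.+1) * rr_le j.+1 (N - j)
    + (if nat_of_ord j == m then rr_part j.+1 * rr_le j.+1 (N - j) else 0))%N); last first.
  by move=> j _; rewrite ltnS leq_eqVlt; case: eqP => [->|_] /=; rewrite ?ltnn ?addn0.
rewrite big_split /= -big_mkcond.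
rewrite (big_ord1_eq _ (fun j => rr_part j.+1 * rr_le j.+1 (N - j))%N) ltnS.
by case: (rr_part m.+1); case: (m <= N)%N; rewrite /= ?mul0n ?mul1n ?addn0.
Qed.

Lemma rr_le_stable N m : (N <= m)%N -> rr_le m N = rr_le N N.
Proof.
elim: m => [|m IHm]; first by rewrite leqn0 => /eqP ->.
rewrite leq_eqVlt ltnS => /orP [/eqP -> // | Nm].
by rewrite rr_le_step IHm // ltnNge Nm andbF addn0.
Qed.

Lemma rr_rr_le N : rr N = rr_le N N.
Proof.
case: N => [//|N]; rewrite /rr count_compsS rr_leS; apply: eq_bigr => j _.
rewrite ltn_ord andTb (eq_count (a2 := fun c => rr_part j.+1 && rr_partition_le j.+1 c)).
  by case: (rr_part j.+1); rewrite ?mul1n // count_pred0.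
exact: rr_partition_cons.
Qed.

Definition rr_le_poly L m : {poly int} := \poly_(N < L) (rr_le m N)%:Z.

Lemma rr_le_polyS L m :
  rr_le_poly L m.+1 * (if rr_part m.+1 then 1 - 'X^(m.+1) else 1)
  = rr_le_poly L m %[mod 'X^L].
Proof.
apply/eqP/eq_truncP => i iL; rewrite /rr_le_poly.
case: ifP => S; last by rewrite mulr1 !coef_poly iL rr_le_step S /= addn0.
rewrite mulrBr mulr1 coefB mulrC coefXnM !coef_poly iL rr_le_step S /=.
case: (ltnP i m.+1) => im; first by rewrite mul0n addn0 subr0.
by rewrite mul1n (leq_ltn_trans (leq_subr _ _) iL) PoszD addrK.
Qed.

Lemma rr_le_poly0 L : rr_le_poly L 0 = 1 %[mod 'X^L].
Proof.
apply/eqP/eq_truncP => -[|i] iL; rewrite coef_poly iL coef1 //.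
by rewrite rr_leS big1.
Qed.

Lemma rr_le_poly_prod L m :
  rr_le_poly L m * \prod_(k < m | rr_part k.+1) (1 - 'X^(k.+1)) = 1 %[mod 'X^L].
Proof.
elim: m => [|m IHm]; first by rewrite big_ord0 mulr1 rr_le_poly0.
rewrite big_mkcond big_ord_recr -big_mkcond /= mulrA mulrAC.
by rewrite (eq_truncMr _ (rr_le_polyS L m)).
Qed.

Lemma rr_poly_prod L m : (L <= m.+1)%N ->
  \poly_(N < L) (rr N)%:Z * \prod_(k < m | rr_part k.+1) (1 - 'X^(k.+1)) = 1 %[mod 'X^L].
Proof.
move=> Lm; rewrite -(rr_le_poly_prod L m) /rr_le_poly.
congr (take_poly _ (_ * _)); apply: eq_poly => N NL.
by rewrite rr_rr_le rr_le_stable //; lia.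
Qed.

(** * The generating function identity *)

Lemma prod_blocks (R : pzSemiRingType) (F : nat -> R) b M :
  \prod_(k < b * M) F k = \prod_(i < M) \prod_(r < b) F (b * i + r)%N.
Proof.
elim: M => [|M IHM]; first by rewrite muln0 !big_ord0.
by rewrite mulnS addnC big_split_ord /= IHM big_ord_recr.
Qed.

Lemma rr_part_block i r : rr_part (5 * i + r).+1 = rr_part r.+1.
Proof. by rewrite /rr_part -addnS mulnC modnMDl. Qed.

Lemma qpoch_X_mod5 M : qpoch ('X : {poly int}) (5 * M) =
  \prod_(k < 5 * M | rr_part k.+1) (1 - 'X^(k.+1)) *
  \prod_(i < M) ((1 - 'X^(2 + 5 * i)) * (1 - 'X^(5 * i.+1 - 2)) * (1 - 'X^(5 * i.+1))).
Proof.
rewrite big_mkcond /qpoch (prod_blocks (fun k => 1 - 'X^(k.+1))).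
rewrite (prod_blocks (fun k => if rr_part k.+1 then 1 - 'X^(k.+1) else 1)).
rewrite -big_split /=; apply: eq_bigr => i _.
rewrite !big_ord_recr !big_ord0 /= !rr_part_block /=.
have -> : (5 * i.+1 - 2 = (5 * i + 2).+1)%N by lia.
have -> : (5 * i.+1 = (5 * i + 4).+1)%N by lia.
by rewrite (_ : (2 + 5 * i = (5 * i + 1).+1)%N); [ring | lia].
Qed.

Lemma qpoch_X_mod3 M : qpoch ('X : {poly int}) (3 * M) =
  \prod_(i < M) ((1 - 'X^(1 + 3 * i)) * (1 - 'X^(3 * i.+1 - 1)) * (1 - 'X^(3 * i.+1))).
Proof.
rewrite /qpoch (prod_blocks (fun k => 1 - 'X^(k.+1))); apply: eq_bigr => i _.
rewrite !big_ord_recr big_ord0 /=.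
have -> : (3 * i.+1 - 1 = (3 * i + 1).+1)%N by lia.
have -> : (3 * i.+1 = (3 * i + 2).+1)%N by lia.
by rewrite (_ : (1 + 3 * i = (3 * i + 0).+1)%N); [ring | lia].
Qed.

Lemma poly_theta_coef b c L M : (0 < c)%N -> (c < b)%N -> (L <= M.+1)%N ->
  \poly_(i < L) theta_coef b c i = theta_poly int b c M %[mod 'X^L].
Proof.
move=> c0 cb LM; apply/eqP/eq_truncP => i iL.
by rewrite coef_poly iL coef_theta_poly_trunc //; lia.
Qed.

Lemma euler_pentagonal_trunc L M : (L + L <= M)%N ->
  \poly_(i < L) euler_coef i = qpoch 'X (3 * M) %[mod 'X^L].
Proof.
move=> LM; under eq_poly do rewrite euler_coefE.
rewrite (poly_theta_coef (M := M)) //.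
  by rewrite -jacobi_triple_product_trunc // qpoch_X_mod3.
by lia.
Qed.

Lemma rr_generating_function L :
  \poly_(N < L) (rr N)%:Z = \poly_(i < L) acoef i * \poly_(i < L) comp_sum i %[mod 'X^L].
Proof.
set M := (L + L)%N; set A := \poly_(i < L) acoef i; set C := \poly_(i < L) comp_sum i.
pose S : {poly int} := \prod_(k < 5 * M | rr_part k.+1) (1 - 'X^(k.+1)).
pose T : {poly int} :=
  \prod_(i < M) ((1 - 'X^(2 + 5 * i)) * (1 - 'X^(5 * i.+1 - 2)) * (1 - 'X^(5 * i.+1))).
have RS : \poly_(N < L) (rr N)%:Z * S = 1 %[mod 'X^L] by apply: rr_poly_prod; lia.
have AT : A = T %[mod 'X^L].
  rewrite /A; under eq_poly do rewrite acoefE.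
  rewrite (poly_theta_coef (M := M)) //; last by lia.
  by rewrite -jacobi_triple_product_trunc.
have ET : \poly_(i < L) euler_coef i = S * T %[mod 'X^L].
  have tr k : (L <= k)%N -> qpoch ('X : {poly int}) k = qpoch 'X L %[mod 'X^L].
    by move=> Lk; have := @qpoch_trunc int 1 L k (ltn0Sn 0) Lk; rewrite expr1.
  by rewrite (euler_pentagonal_trunc (M := M)) // /S /T -qpoch_X_mod5 !tr //; lia.
rewrite -[X in take_poly _ X = _]mulr1 -(eq_truncMl _ (euler_mul_comp_sum L)).
rewrite mulrA (eq_truncMr _ (eq_truncMl _ ET)) mulrA (eq_truncMr _ (eq_truncMr _ RS)).
by rewrite mul1r -(eq_truncMr _ AT).
Qed.

Theorem mainTheorem16 (n : nat) :
  (rr n)%:Z =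
  \sum_(i < n.+1)
     acoef i * \sum_(c <- comps (n - i) | all inP5 c) (-1) ^+ ellhat c.
Proof.
have /eqP/eq_truncP/(_ n (ltnSn n)) := rr_generating_function n.+1.
by rewrite coef_poly ltnSn coef_poly_mul.
Qed.
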